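(* Let $S[1..n]$ be a string over $\Sigma=\{1,\ldots,\sigma\}$, and suppose its rank array and lcp array are given. Then for any position interval $[x..y]$ with $1\le x\le y\le n$, one can find $\mathrm{LR}_x^y$ or determine that it does not exist using $O(x)$ time and $O(n)$ space. If there are multiple choices for $\mathrm{LR}_x^y$, the leftmost one is returned.
   Context: For $1\le i\le j\le n$, $S[i..j]=S[i]\cdots S[j]$. A substring $S[i..j]$ covers $[x..y]$ if $i\le x\le y\le j$. A substring is unique if it has no other occurrence starting at a different position; it is a repeat otherwise. $\mathrm{LR}_x^y$ is a repeat $S[i..j]$ covering $[x..y]$ such that no repeat $S[i'..j']$ covering $[x..y]$ has $j'-i'>j-i$. The suffix array $SA[1..n]$ is the permutation of $\{1,\ldots,n\}$ such that $S[SA[1]..n]<S[SA[2]..n]<\cdots$ in lexicographic order (a proper prefix is smaller). The rank array is its inverse: $\mathrm{Rank}[i]=j$ iff $SA[j]=i$. The lcp array $\mathrm{LCP}[1..n+1]$ has $\mathrm{LCP}[1]=\mathrm{LCP}[n+1]=0$ and, for $2\le i\le n$, $\mathrm{LCP}[i]$ is the length of the longest common prefix of $S[SA[i-1]..n]$ and $S[SA[i]..n]$. Complexity is in the word-RAM model with each integer in $\{0,\ldots,n+1\}$ occupying a constant number of words. *)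

From mathcomp Require Import all_boot.
Set Implicit Arguments. Unset Strict Implicit. Unset Printing Implicit Defensive.

Definition chr (S : seq nat) (i : nat) : nat := nth 0 S i.-1.

Definition substr (S : seq nat) (i j : nat) : seq nat := take (j.+1 - i) (drop i.-1 S).

Definition suffix (S : seq nat) (i : nat) : seq nat := drop i.-1 S.

Definition is_string (sigma n : nat) (S : seq nat) : Prop :=
  1 <= n /\ size S = n /\ all (fun a => (1 <= a) && (a <= sigma)) S.

Definition occurs_at (S : seq nat) (i j i' : nat) : Prop :=
  1 <= i' /\ i' + (j - i) <= size S /\ substr S i' (i' + (j - i)) = substr S i j.

Definition is_repeat (S : seq nat) (i j : nat) : Prop :=
  1 <= i /\ i <= j /\ j <= size S /\ exists i', i' <> i /\ occurs_at S i j i'.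

Definition covers (i j x y : nat) : Prop := i <= x /\ x <= y /\ y <= j.

Definition is_LR (S : seq nat) (x y i j : nat) : Prop :=
  is_repeat S i j /\ covers i j x y /\
  forall i' j', is_repeat S i' j' -> covers i' j' x y -> j' - i' <= j - i.

Definition is_leftmost_LR (S : seq nat) (x y i j : nat) : Prop :=
  is_LR S x y i j /\ forall i' j', is_LR S x y i' j' -> i <= i'.

Fixpoint lexlt (u v : seq nat) : bool :=
  match u, v with
  | _, [::] => false
  | [::], _ :: _ => true
  | a :: u', b :: v' => (a < b) || ((a == b) && lexlt u' v')
  end.

Fixpoint lcp (u v : seq nat) : nat :=
  match u, v with
  | a :: u', b :: v' => if a == b then (lcp u' v').+1 else 0
  | _, _ => 0
  end.

Definition is_suffix_array (S : seq nat) (SA : seq nat) : Prop :=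
  perm_eq SA (iota 1 (size S)) /\ sorted lexlt (map (suffix S) SA).

Definition SAat (SA : seq nat) (k : nat) : nat := nth 0 SA k.-1.

Definition rank_of (SA : seq nat) (i : nat) : nat := (index i SA).+1.

Definition lcp_of (S SA : seq nat) (k : nat) : nat :=
  if (2 <= k) && (k <= size S)
  then lcp (suffix S (SAat SA k.-1)) (suffix S (SAat SA k))
  else 0.

(* Memory cells indexed by nat, holding nat; every instruction costs one unit
   of time. Space = range of addresses touched; the word size is enforced by
   bounding every stored value by a polynomial in n (word size O(log n)). *)

Inductive instr : Type :=
  | IConst of nat & nat
  | IAdd of nat & nat & nat
  | ISub of nat & nat & nat      (* M[a] := M[b] - M[c] (truncated) *)
  | IMul of nat & nat & nat
  | IDiv of nat & nat & nat      (* M[a] := M[b] / M[c] (0 if M[c] = 0) *)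
  | ILoad of nat & nat
  | IStore of nat & nat
  | IJlt of nat & nat & nat
  | IHalt.

Definition program := seq instr.

Record state := State { pc : nat; memory : nat -> nat }.

Definition upd (m : nat -> nat) (a v : nat) : nat -> nat :=
  fun b => if b == a then v else m b.

Definition fetch (P : program) (s : state) : instr := nth IHalt P (pc s).

Definition halted (P : program) (s : state) : bool :=
  if fetch P s is IHalt then true else false.

Definition step (P : program) (s : state) : state :=
  let m := memory s in
  let nxt := (pc s).+1 in
  match fetch P s with
  | IConst a k => State nxt (upd m a k)
  | IAdd a b c => State nxt (upd m a (m b + m c))
  | ISub a b c => State nxt (upd m a (m b - m c))
  | IMul a b c => State nxt (upd m a (m b * m c))
  | IDiv a b c => State nxt (upd m a (m b %/ m c))
  | ILoad a b => State nxt (upd m a (m (m b)))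
  | IStore a b => State nxt (upd m (m a) (m b))
  | IJlt a b l => State (if m a < m b then l else nxt) m
  | IHalt => s
  end.

Definition touched (P : program) (s : state) : seq nat :=
  let m := memory s in
  match fetch P s with
  | IConst a _ => [:: a]
  | IAdd a b c | ISub a b c | IMul a b c | IDiv a b c => [:: a; b; c]
  | ILoad a b => [:: a; b; m b]
  | IStore a b => [:: a; m a; b]
  | IJlt a b _ => [:: a; b]
  | IHalt => [::]
  end.

Definition run (P : program) (t : nat) (s : state) : state := iter t (step P) s.

Definition runs_within (P : program) (s : state) (T A W : nat) : Prop :=
  halted P (run P T s) /\
  (forall t, t < T -> ~~ halted P (run P t s)) /\
  (forall t, t < T -> all (fun a => a < A) (touched P (run P t s))) /\
  (forall t, t <= T -> forall a, memory (run P t s) a <= W).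

(* Input layout: M[0] = n, M[1] = x, M[2] = y,
   M[2+i] = Rank[i] (1 <= i <= n), M[n+2+i] = LCP[i] (1 <= i <= n+1), 0 elsewhere. *)
Definition input_mem (n x y : nat) (Rank LCP : nat -> nat) : nat -> nat :=
  fun a =>
    if a == 0 then n else if a == 1 then x else if a == 2 then y
    else if a <= n.+2 then Rank (a - 2)
    else if a <= (n.+1).*2.+1 then LCP (a - n.+2)
    else 0.

Definition correct_output (S : seq nat) (x y : nat) (m : nat -> nat) : Prop :=
  (m 0 = 0 /\ ~ (exists i j, is_LR S x y i j)) \/
  (m 0 = 1 /\ is_leftmost_LR S x y (m 1) (m 2)).

(* S[i..j] is a repeat iff j - i < L i, where L i = max(LCP[Rank i], LCP[Rank i + 1]):
   since the suffix array is sorted, no suffix shares a longer prefix with the suffix at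
   i than its two neighbours do. So the repeats covering [x..y] start at some i <= x and
   reach y only if i + L i > y, and the leftmost LR_x^y is S[i .. i + L i - 1] for the
   leftmost i <= x maximising L i among those with i + L i > y. One scan over
   i = 1..x, with a constant number of word operations per position, finds it. *)

From Pilot Require Import Defs.
From mathcomp Require Import all_boot zify.
From Stdlib Require Import FunctionalExtensionality.
Set Implicit Arguments. Unset Strict Implicit. Unset Printing Implicit Defensive.

Lemma lcpC u v : lcp u v = lcp v u.
Proof. elim: u v => [|a u IH] [|b v] //=; rewrite eq_sym IH; by case: (b == a). Qed.

Lemma lcp_leq_size u v : lcp u v <= size u.
Proof. elim: u v => [|a u IH] [|b v] //=; case: (a == b) => //; exact: IH. Qed.

Lemma leq_lcpP k u v :
  (k <= lcp u v) <-> [/\ k <= size u, k <= size v & take k u = take k v].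
Proof.
elim: k u v => [|k IH] [|a u] [|b v] /=; try (split; [done | by case]).
case: eqP => [->|neq_ab] /=.
  rewrite ltnS IH !ltnS; split; first by case=> ? ? ->.
  by case=> ? ? [->].
by split=> // -[_ _ []].
Qed.

Lemma lexlt_trans : transitive lexlt.
Proof.
move=> v u w; elim: u v w => [|a u IH] [|b v] [|c w] //=.
move=> /orP [ab|/andP [/eqP <- uv]] /orP [bc|/andP [/eqP <- vw]].
- by rewrite (ltn_trans ab bc).
- by rewrite ab.
- by rewrite bc.
- by rewrite eqxx (IH _ _ uv vw) orbT.
Qed.

Lemma lcp_lexlt_between u v w :
  lexlt u v -> lexlt v w -> lcp u w <= minn (lcp u v) (lcp v w).
Proof.
elim: u v w => [|a u IH] [|b v] [|c w] //= uv vw.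
case: eqP => [ac|] //=; subst c.
move: uv vw => /orP [ab|/andP [/eqP ab uv]] /orP [ba|/andP [/eqP ba vw]].
- by move: (ltn_trans ab ba); rewrite ltnn.
- by move: ab; rewrite ba ltnn.
- by move: ba; rewrite ab ltnn.
by subst b; rewrite eqxx minnSS ltnS; exact: IH.
Qed.

Lemma size_suffix_from S i : size (Defs.suffix S i) = size S - i.-1.
Proof. by rewrite /Defs.suffix size_drop. Qed.

Section SuffixArray.
Variables (S SA : seq nat).
Hypothesis SA_S : is_suffix_array S SA.
Local Notation n := (size S).

Lemma mem_SA i : (i \in SA) = (1 <= i <= n).
Proof. by case: SA_S => /perm_mem -> _; rewrite mem_iota; lia. Qed.

Lemma size_SA : size SA = n.
Proof. by case: SA_S => /perm_size ->; rewrite size_iota. Qed.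

Lemma uniq_SA : uniq SA.
Proof. by case: SA_S => /perm_uniq ->; rewrite iota_uniq. Qed.

Lemma rank_of_range j : 1 <= j <= n -> 1 <= rank_of SA j <= n.
Proof.
move=> j_range; have : index j SA < size SA by rewrite index_mem mem_SA.
by rewrite size_SA /rank_of; lia.
Qed.

(* The suffix of rank [p.+1]: positions in [SA] are 0-based. *)
Definition sa_suffix p := Defs.suffix S (nth 0 SA p).

Lemma lexlt_sa_suffix p q : p < q -> q < n -> lexlt (sa_suffix p) (sa_suffix q).
Proof.
move=> pq qn; case: SA_S => _ sorted_SA.
have := sorted_ltn_nth lexlt_trans [::] sorted_SA.
rewrite size_map size_SA => /(_ p q); rewrite !inE.
rewrite /sa_suffix -!(nth_map 0 [::] (Defs.suffix S)) ?size_SA; [|lia|lia].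
by apply; lia.
Qed.

Lemma lcp_ofS p :
  lcp_of S SA p.+1 = if 0 < p < n then lcp (sa_suffix p.-1) (sa_suffix p) else 0.
Proof. by case: p. Qed.

(* [repeat_len i] is the length of the longest repeat starting at [i]. *)
Definition repeat_len i :=
  maxn (lcp_of S SA (rank_of SA i)) (lcp_of S SA (rank_of SA i).+1).

Lemma sa_suffix_index i : i \in SA -> sa_suffix (index i SA) = Defs.suffix S i.
Proof. by move=> iSA; rewrite /sa_suffix nth_index. Qed.

(* Suffixes further away in the sorted suffix array share no longer prefix. *)
Lemma lcp_suffix_leq_repeat_len i i' : i \in SA -> i' \in SA -> i' <> i ->
  lcp (Defs.suffix S i) (Defs.suffix S i') <= repeat_len i.
Proof.
move=> iSA i'SA neq_i'i.
have pn : index i SA < n by rewrite -size_SA index_mem.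
have qn : index i' SA < n by rewrite -size_SA index_mem.
have neq_pq : index i SA != index i' SA.
  apply/negP => /eqP e; apply: neq_i'i.
  by rewrite -(nth_index 0 i'SA) -e nth_index.
rewrite -(sa_suffix_index iSA) -(sa_suffix_index i'SA).
rewrite /repeat_len /rank_of !lcp_ofS.
set p := index i SA in pn neq_pq *; set q := index i' SA in qn neq_pq *.
case: (ltngtP q p) neq_pq => // [qp|pq] _.
- rewrite (_ : 0 < p < n) ?(lcpC (sa_suffix p)) /=; last lia.
  apply: leq_trans (leq_maxl _ _).
  case: (ltngtP q p.-1) => [qp1|qp1|->] //; last lia.
  have p1n : p.-1 < n by lia.
  have p1p : p.-1 < p by lia.
  have := lcp_lexlt_between (lexlt_sa_suffix qp1 p1n) (lexlt_sa_suffix p1p pn).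
  by move/leq_trans; apply; exact: geq_minr.
- rewrite (_ : (0 < p.+1 < n) = true) /=; last lia.
  apply: leq_trans (leq_maxr _ _).
  case: (ltngtP q p.+1) => [qp1|qp1|->] //; first lia.
  have p1n : p.+1 < n by lia.
  have := lcp_lexlt_between (lexlt_sa_suffix (ltnSn p) p1n) (lexlt_sa_suffix qp1 qn).
  by move/leq_trans; apply; exact: geq_minl.
Qed.

Lemma repeat_len_witness i k : i \in SA -> 0 < k <= repeat_len i ->
  exists i', [/\ i' \in SA, i' <> i & k <= lcp (Defs.suffix S i) (Defs.suffix S i')].
Proof.
move=> iSA /andP [k_gt0 k_le].
have pn : index i SA < n by rewrite -size_SA index_mem.
have mem_nth_SA q : q < n -> nth 0 SA q \in SA.
  by move=> qn; rewrite mem_nth // size_SA.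
have nth_SA_neq q : q < n -> q != index i SA -> nth 0 SA q <> i.
  by move=> qn /eqP neq_q e; apply: neq_q; rewrite -e index_uniq ?uniq_SA ?size_SA.
move: k_le; rewrite -(sa_suffix_index iSA) /repeat_len /rank_of !lcp_ofS /= leq_max.
set p := index i SA in pn nth_SA_neq *.
case/orP; case: ifP => [range k_le|_]; try by rewrite leqNgt k_gt0.
- exists (nth 0 SA p.-1); split; [apply: mem_nth_SA | apply: nth_SA_neq | by rewrite lcpC];
    lia.
- exists (nth 0 SA p.+1); split; [apply: mem_nth_SA | apply: nth_SA_neq | by []]; lia.
Qed.

Lemma repeat_len_leq i : i \in SA -> repeat_len i <= n - i.-1.
Proof.
move=> iSA; rewrite -size_suffix_from -(sa_suffix_index iSA).
rewrite /repeat_len /rank_of !lcp_ofS geq_max.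
by apply/andP; split; case: ifP => // _; [rewrite lcpC|]; exact: lcp_leq_size.
Qed.

Lemma is_repeat_iff i j :
  is_repeat S i j <-> [/\ 1 <= i, i <= j, j <= n & j - i < repeat_len i].
Proof.
have substrE a d : substr S a (a + d) = take d.+1 (Defs.suffix S a).
  by rewrite /substr /Defs.suffix; congr take; lia.
split.
- case=> i1 [ij [jn [i' [neq_i' [i'1 [i'n occ]]]]]]; split=> //.
  have iSA : i \in SA by rewrite mem_SA; lia.
  have i'SA : i' \in SA by rewrite mem_SA; lia.
  apply: leq_trans (lcp_suffix_leq_repeat_len iSA i'SA neq_i').
  apply/leq_lcpP; rewrite !size_suffix_from; split; [lia | lia |].
  by move: occ; rewrite substrE {2}(_ : j = i + (j - i)) ?substrE; last lia.
- case=> i1 ij jn lt_ji.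
  have iSA : i \in SA by rewrite mem_SA; lia.
  have [i' []] := repeat_len_witness (k := (j - i).+1) iSA ltac:(lia).
  rewrite mem_SA => i'n neq_i' /leq_lcpP []; rewrite !size_suffix_from => _ len_i' take_eq.
  do 3 split=> //; exists i'; split=> //; split; [lia | split; first lia].
  by rewrite substrE -take_eq {2}(_ : j = i + (j - i)) ?substrE; last lia.
Qed.

End SuffixArray.

Section Scan.
Variables (S SA : seq nat) (y : nat).
Local Notation L := (repeat_len S SA).

Definition scan_inv k best bi :=
  [/\ bi <= k,
   forall i, 1 <= i <= k -> y < i + L i -> L i <= best &
   0 < best -> [/\ 1 <= bi, y < bi + L bi, L bi = best &
      forall i, 1 <= i < bi -> y < i + L i -> L i < best]].

Lemma scan_inv0 : scan_inv 0 0 0.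
Proof. by split=> // i; lia. Qed.

Lemma scan_invS k best bi : scan_inv k best bi ->
  let i := k.+1 in let better := (y < i + L i) && (best < L i) in
  scan_inv i (if better then L i else best) (if better then i else bi).
Proof.
case=> bi_le best_max best_spec /=.
case: ifP => [/andP [reach better]|not_better]; split=> //; try lia.
- move=> i range reach_i; case: (ltnP i k.+1) => ik; last by have -> : i = k.+1 by lia.
  by have := best_max i ltac:(lia) reach_i; lia.
- move=> _; split=> // i range reach_i.
  by have := best_max i ltac:(lia) reach_i; lia.
- move=> i range reach_i; case: (ltnP i k.+1) => ik; first by apply: best_max => //; lia.
  have ei : i = k.+1 by lia.
  by move: not_better; rewrite -ei reach_i /=; case: ltnP.
Qed.

Hypothesis SA_S : is_suffix_array S SA.

Lemma scan_inv_bounds k best bi : k <= size S -> scan_inv k best bi ->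
  best <= size S /\ bi <= k.
Proof.
move=> k_le [bi_le _ best_spec]; split=> //.
case: (posnP best) => [-> //|/best_spec [bi_gt0 _ <- _]].
have biSA : bi \in SA by rewrite (mem_SA SA_S); lia.
by have := repeat_len_leq S biSA; lia.
Qed.

Variable x : nat.
Hypotheses (x_gt0 : 0 < x) (x_le_y : x <= y) (y_le_n : y <= size S).

Lemma scan_inv_correct best bi (m : nat -> nat) : scan_inv x best bi ->
  m 0 = (0 < best) -> m 1 = bi -> m 2 = bi + best - 1 ->
  correct_output S x y m.
Proof.
case=> bi_le best_max best_spec m0 m1 m2; rewrite /correct_output m0 m1 m2.
case: (posnP best) => [best0|best_gt0].
  left; split=> // -[i [j [/(is_repeat_iff SA_S) [i1 ij jn lt] [[ix [_ yj]] _]]]].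
  by have := best_max i ltac:(lia) ltac:(lia); lia.
right; split=> //.
have [bi1 reach Lbi bi_left] := best_spec best_gt0.
have biSA : bi \in SA by rewrite (mem_SA SA_S); lia.
have := repeat_len_leq S biSA => Lbi_le.
have LR : is_LR S x y bi (bi + best - 1).
  split; last split.
  - by rewrite (is_repeat_iff SA_S); split; lia.
  - by split; lia.
  - move=> i j /(is_repeat_iff SA_S) [i1 ij jn lt] [ix [_ yj]].
    by have := best_max i ltac:(lia) ltac:(lia); lia.
split=> // i j [/(is_repeat_iff SA_S) [i1 ij jn lt] [[ix [_ yj]] maxlen]].
have := maxlen _ _ (proj1 LR) (proj1 (proj2 LR)).
by case: (ltnP i bi) => // ib; have := bi_left i ltac:(lia) ltac:(lia); lia.
Qed.

End Scan.

Section Execution.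
Variables (P : program) (A W : nat).

Definition step_ok s :=
  [/\ ~~ halted P s, all (fun a => a < A) (touched P s) & forall a, memory s a <= W].

Definition exec s k s' := run P k s = s' /\ forall t, t < k -> step_ok (run P t s).

Lemma exec0 s s' : s = s' -> exec s 0 s'.
Proof. by move=> ->; split. Qed.

Lemma exec_step s k s' : step_ok s -> exec (step P s) k s' -> exec s k.+1 s'.
Proof.
move=> ok_s [run_s ok_run]; split; first by rewrite /run iterSr.
by case=> [|t] lt_tk //; rewrite /run iterSr; exact: ok_run.
Qed.

Lemma exec_trans s k1 s1 k2 s2 : exec s k1 s1 -> exec s1 k2 s2 -> exec s (k1 + k2) s2.
Proof.
move=> [run1 ok1] [run2 ok2]; split.
  by rewrite /run addnC iterD -/(run P k1 s) run1.
move=> t lt_t; case: (ltnP t k1) => tk; first exact: ok1.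
by have := ok2 (t - k1) ltac:(lia); rewrite -run1 /run -iterD subnK.
Qed.

Lemma exec_runs_within s T s' : exec s T s' -> halted P s' ->
  (forall a, memory s' a <= W) -> runs_within P s T A W.
Proof.
move=> [run_s ok_run] halt_s' mem_s'; split; first by rewrite run_s.
split; first by move=> t /ok_run [].
split; first by move=> t /ok_run [].
by move=> t; rewrite leq_eqVlt => /orP [/eqP ->|/ok_run []//]; rewrite run_s.
Qed.

End Execution.

Definition with_regs (H : nat -> nat) (r : seq nat) : nat -> nat :=
  fun a => if a < size r then nth 0 r a else H a.

Lemma with_regs_nth H r a : a < size r -> with_regs H r a = nth 0 r a.
Proof. by rewrite /with_regs => ->. Qed.

Lemma with_regs_leq H r W a :
  all (fun v => v <= W) r -> (forall a, H a <= W) -> with_regs H r a <= W.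
Proof.
move=> /allP r_le H_le; rewrite /with_regs; case: ltnP => // ar.
by apply: r_le; rewrite mem_nth.
Qed.

Lemma with_regs_id H r : (forall a, a < size r -> nth 0 r a = H a) -> with_regs H r = H.
Proof.
by move=> rH; apply: functional_extensionality => a; rewrite /with_regs; case: ltnP => // /rH.
Qed.

Lemma upd_with_regs H r a v :
  a < size r -> upd (with_regs H r) a v = with_regs H (set_nth 0 r a v).
Proof.
move=> ar; apply: functional_extensionality => b.
rewrite /upd /with_regs size_set_nth nth_set_nth /= (maxn_idPr ar).
by case: eqP => [->|_] //; rewrite ar.
Qed.

Lemma upd_with_regs_high H r a v :
  size r <= a -> upd (with_regs H r) a v = with_regs (upd H a v) r.
Proof.
move=> ra; apply: functional_extensionality => b.
by rewrite /upd /with_regs; case: eqP => [->|_] //; rewrite ltnNge ra.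
Qed.

Lemma upd_leq H a v W : (forall b, H b <= W) -> v <= W -> forall b, upd H a v b <= W.
Proof. by move=> H_le v_le b; rewrite /upd; case: eqP. Qed.

Lemma upd_neq H a v b : b != a -> upd H a v b = H b.
Proof. by rewrite /upd => /negbTE ->. Qed.

Definition reg_instr (i : instr) sz :=
  match i with
  | IConst a _ => a < sz
  | IAdd a b c | ISub a b c | IMul a b c | IDiv a b c => [&& a < sz, b < sz & c < sz]
  | ILoad a b | IJlt a b _ => (a < sz) && (b < sz)
  | _ => false
  end.

Definition load_in_range (i : instr) r A := if i is ILoad _ b then nth 0 r b < A else true.

Definition reg_step (P : program) H pc r : nat * seq nat :=
  match nth IHalt P pc with
  | IConst a k => (pc.+1, set_nth 0 r a k)
  | IAdd a b c => (pc.+1, set_nth 0 r a (nth 0 r b + nth 0 r c))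
  | ISub a b c => (pc.+1, set_nth 0 r a (nth 0 r b - nth 0 r c))
  | IMul a b c => (pc.+1, set_nth 0 r a (nth 0 r b * nth 0 r c))
  | IDiv a b c => (pc.+1, set_nth 0 r a (nth 0 r b %/ nth 0 r c))
  | ILoad a b => (pc.+1, set_nth 0 r a (with_regs H r (nth 0 r b)))
  | IJlt a b l => (if nth 0 r a < nth 0 r b then l else pc.+1, r)
  | _ => (pc, r)
  end.

Lemma step_with_regs P H pc r : reg_instr (nth IHalt P pc) (size r) ->
  step P (State pc (with_regs H r)) =
  State (reg_step P H pc r).1 (with_regs H (reg_step P H pc r).2).
Proof.
rewrite /step /fetch /reg_step /=.
case: (nth IHalt P pc) => //=.
- by move=> a k ha; rewrite upd_with_regs.
- by move=> a b c /and3P [ha hb hc]; rewrite !with_regs_nth // upd_with_regs.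
- by move=> a b c /and3P [ha hb hc]; rewrite !with_regs_nth // upd_with_regs.
- by move=> a b c /and3P [ha hb hc]; rewrite !with_regs_nth // upd_with_regs.
- by move=> a b c /and3P [ha hb hc]; rewrite !with_regs_nth // upd_with_regs.
- by move=> a b /andP [ha hb]; rewrite (with_regs_nth H hb) upd_with_regs.
- by move=> a b l /andP [ha hb]; rewrite !with_regs_nth.
Qed.

Lemma exec_reg_step P A W H pc r k s' :
  reg_instr (nth IHalt P pc) (size r) -> size r <= A ->
  load_in_range (nth IHalt P pc) r A ->
  all (fun v => v <= W) r -> (forall a, H a <= W) ->
  exec P A W (State (reg_step P H pc r).1 (with_regs H (reg_step P H pc r).2)) k s' ->
  exec P A W (State pc (with_regs H r)) k.+1 s'.
Proof.
move=> reg_i rA load_i r_le H_le exec_s; apply: exec_step; last by rewrite step_with_regs.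
split; last by move=> a; apply: with_regs_leq.
- by rewrite /halted /fetch /=; case: (nth IHalt P pc) reg_i.
- rewrite /touched /fetch /=.
  case: (nth IHalt P pc) reg_i load_i => //= *;
  repeat match goal with H : is_true (_ && _) |- _ => case/andP: H => ? ? end;
  rewrite ?with_regs_nth //; apply/and4P || apply/and3P || apply/andP; split => //; lia.
Qed.

Lemma exec_store P A W H pc r k s' a b :
  nth IHalt P pc = IStore a b -> a < size r -> b < size r ->
  size r <= nth 0 r a -> nth 0 r a < A -> size r <= A ->
  all (fun v => v <= W) r -> (forall a, H a <= W) ->
  exec P A W (State pc.+1 (with_regs (upd H (nth 0 r a) (nth 0 r b)) r)) k s' ->
  exec P A W (State pc (with_regs H r)) k.+1 s'.
Proof.
move=> store_ab ar br r_a a_A rA r_le H_le exec_s; apply: exec_step.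
  split; last by move=> c; apply: with_regs_leq.
  - by rewrite /halted /fetch /= store_ab.
  - by rewrite /touched /fetch /= store_ab /= with_regs_nth //; apply/and4P; split=> //; lia.
by rewrite /step /fetch /= store_ab /= !with_regs_nth // upd_with_regs_high.
Qed.

(* Instructions address memory cells directly, so the registers are the cells
   0..15, which initially hold n, x, y and Rank[1..13]. The prologue saves cells
   3..15 at B + 3 .. B + 15 (B = 2n + 16, just above the input), after which input
   cell a is read at (1 - [a >= 16]) * B + a. Loop registers: 0 = B, 2 = 1, 4 = n,
   5 = x, 6 = y, 7 = n + 2, 8 = i, 9 = best, 10 = bi, 11 = 16; 1, 3, 12, 13 are
   scratch. All tests inside the loop are branch-free, via d %/ d = [d > 0]. *)
Definition prog : program := [::
  (* 0: x * n + y in 1, the constant 1 in 2, then 2n + 19 = B + 3 in 0 *)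
  IMul 1 1 0; IAdd 1 1 2; IDiv 2 0 0; IAdd 0 0 0;
  IAdd 0 0 2; IAdd 0 0 2; IAdd 0 0 2; IAdd 0 0 2; IAdd 0 0 2; IAdd 0 0 2;
  IAdd 0 0 2; IAdd 0 0 2; IAdd 0 0 2; IAdd 0 0 2; IAdd 0 0 2; IAdd 0 0 2;
  IAdd 0 0 2; IAdd 0 0 2; IAdd 0 0 2; IAdd 0 0 2; IAdd 0 0 2; IAdd 0 0 2;
  IAdd 0 0 2;
  (* 23: save cells 3..15 at B + 3 .. B + 15 *)
  IStore 0 3; IAdd 0 0 2; IStore 0 4; IAdd 0 0 2; IStore 0 5; IAdd 0 0 2;
  IStore 0 6; IAdd 0 0 2; IStore 0 7; IAdd 0 0 2; IStore 0 8; IAdd 0 0 2;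
  IStore 0 9; IAdd 0 0 2; IStore 0 10; IAdd 0 0 2; IStore 0 11; IAdd 0 0 2;
  IStore 0 12; IAdd 0 0 2; IStore 0 13; IAdd 0 0 2; IStore 0 14; IAdd 0 0 2;
  IStore 0 15;
  (* 48: B, n, x, y, n + 2, i = 1, best = bi = 0, 16 *)
  IConst 3 15; ISub 0 0 3; IConst 11 16; ISub 4 0 11; IConst 3 2; IDiv 4 4 3;
  ISub 5 1 2; IDiv 5 5 4; IMul 6 5 4; ISub 6 1 6; IAdd 7 4 2; IAdd 7 7 2;
  IConst 8 1; IConst 9 0; IConst 10 0;
  (* 63: loop head (exit when x < i); Rank[i] into 3 *)
  IJlt 5 8 101; IAdd 1 8 2; IAdd 1 1 2; IDiv 3 1 11; IDiv 3 3 3; ISub 3 2 3;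
  IMul 3 3 0; IAdd 3 3 1; ILoad 3 3;
  (* 72: LCP[Rank i] into 12 *)
  IAdd 1 7 3; IDiv 12 1 11; IDiv 12 12 12; ISub 12 2 12; IMul 12 12 0;
  IAdd 12 12 1; ILoad 12 12;
  (* 79: LCP[Rank i + 1] into 13, then L = max into 12 *)
  IAdd 1 1 2; IDiv 13 1 11; IDiv 13 13 13; ISub 13 2 13; IMul 13 13 0;
  IAdd 13 13 1; ILoad 13 13; ISub 13 13 12; IAdd 12 12 13;
  (* 88: c = [y < i + L] * [best < L]; best += (L - best) * c; bi += (i - bi) * c;
     i += 1 and back to 63 *)
  IAdd 1 8 12; ISub 1 1 6; IDiv 1 1 1; ISub 3 12 9; IDiv 13 3 3; IMul 1 1 13;
  IMul 3 3 1; IAdd 9 9 3; ISub 3 8 10; IMul 3 3 1; IAdd 10 10 3; IAdd 8 8 2;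
  IJlt 2 0 63;
  (* 101: output [best > 0], bi, bi + best - 1 *)
  IDiv 0 9 9; ISub 14 14 14; IAdd 1 10 14; IAdd 3 10 9; ISub 2 3 2; IHalt].

Lemma leq_bitc_mul (s : bool) B : (1 - s) * B <= B.
Proof. by case: s; rewrite ?mul0n ?mul1n. Qed.

Lemma select_bit (c : bool) a b : (c -> a <= b) -> a + (b - a) * c = if c then b else a.
Proof. by case: c => [/(_ isT) /subnKC|_]; rewrite ?muln1 ?muln0 ?addn0. Qed.

Local Arguments divn : simpl never.

Section Program.
Variables (n x y : nat) (inp : nat -> nat) (W A B : nat).
Hypotheses (x_gt0 : 0 < x) (x_le_y : x <= y) (y_le_n : y <= n).
Hypotheses (W_big : n * n + n.*2 + 40 <= W) (A_big : 40 * n.+1 <= A) (B_def : B = n.*2 + 16).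
Hypothesis inp_le : forall a, inp a <= n.

Ltac bound :=
  first [ assumption | apply: leq_trans (inp_le _) _; lia
        | apply: (@leq_trans 40); [done | lia]
        | apply: leq_trans (leq_bitc_mul _ _) _; lia
        | apply: leq_trans (leq_add (leq_bitc_mul _ _) (leqnn _)) _; lia | lia ].
Ltac bounds := rewrite /=; repeat (apply/andP; split); bound.
Ltac mem_bound :=
  first [ assumption | move=> ?; apply: leq_trans (inp_le _) _; lia
        | apply: upd_leq; [mem_bound | bound] ].
Ltac run_reg_step :=
  apply: exec_reg_step;
  [ done | rewrite /=; lia
  | done || (rewrite /=; apply: leq_trans (leq_add (leq_bitc_mul _ _) (leqnn _)) _; lia)
         || (rewrite /=; lia)
  | bounds | mem_bound | rewrite /reg_step /= ].
Ltac run_store :=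
  apply: exec_store; [ done | done | done | rewrite /=; lia | rewrite /=; lia
                     | rewrite /=; lia | bounds | mem_bound | rewrite /= ].

Definition at_loop_head (H : nat -> nat) i best bi s :=
  exists t1 t3 t12 t13, [/\ t1 <= W, t3 <= W, t12 <= W, t13 <= W &
    s = State 63 (with_regs H
          [:: B; t1; 1; t3; n; x; y; n.+2; i; best; bi; 16; t12; t13; inp 14; inp 15])].

Hypotheses (inp0 : inp 0 = n) (inp1 : inp 1 = x) (inp2 : inp 2 = y).

Lemma prologue :
  exists H s, [/\ forall a, H a <= W, forall a, 3 <= a <= 15 -> H (B + a) = inp a,
    forall a, a < n.*2 + 19 -> H a = inp a, at_loop_head H 1 0 0 s &
    exec prog A W (State 0 inp) 63 s].
Proof.
have n_gt0 : 0 < n by lia.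
have xn_le : x * n <= n * n by apply: leq_mul; lia.
eexists; eexists; split; last first.
rewrite -{1}(@with_regs_id inp [:: n; x; y; inp 3; inp 4; inp 5; inp 6; inp 7; inp 8;
  inp 9; inp 10; inp 11; inp 12; inp 13; inp 14; inp 15]); last first.
  by case=> [|[|[|[|[|[|[|[|[|[|[|[|[|[|[|[|a]]]]]]]]]]]]]]]].
do 3 run_reg_step. rewrite divnn n_gt0.
have [D D_def] : exists D, D = n.*2 by eexists.
run_reg_step. rewrite addnn -D_def.
do 19 (run_reg_step; rewrite -?addnA).
rewrite (_ : D + 19 = B + 3); last lia.
run_store.
do 12 (run_reg_step; rewrite -?addnA; run_store).
run_reg_step. run_reg_step. rewrite (_ : B + 15 - 15 = B); last lia.
run_reg_step. run_reg_step. rewrite (_ : B - 16 = n.*2); last lia.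
run_reg_step. run_reg_step. rewrite (_ : n.*2 %/ 2 = n); last by rewrite -muln2 mulnK.
run_reg_step. run_reg_step. rewrite (_ : (x * n + y - 1) %/ n = x); last first.
  by rewrite -addnBA ?divnMDl ?divn_small ?addn0 //; lia.
run_reg_step. run_reg_step. rewrite (_ : x * n + y - x * n = y); last lia.
do 5 run_reg_step.
- by apply: exec0; rewrite !addn1.
- by exists (x * n + y), 2, (inp 12), (inp 13); split; [lia | lia | bound | bound | ].
- move=> a ha; do 13 (rewrite upd_neq; last (apply/eqP; lia)); done.
- move=> a /andP [a3 a15]; rewrite /upd !eqn_add2l; move: a3 a15.
  by case: a => [|[|[|[|[|[|[|[|[|[|[|[|[|[|[|[|a]]]]]]]]]]]]]]]].
- mem_bound.
Qed.

Hypothesis inp_rank : forall j, 1 <= j <= n -> 1 <= inp (j + 1 + 1) <= n.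

(* max(LCP[Rank i], LCP[Rank i + 1]), as the loop body computes it *)
Definition input_L i :=
  let l1 := inp (n.+2 + inp (i + 1 + 1)) in l1 + (inp (n.+2 + inp (i + 1 + 1) + 1) - l1).

Section Loop.
Variable H : nat -> nat.
Hypotheses (H_le : forall a, H a <= W) (H_saved : forall a, 3 <= a <= 15 -> H (B + a) = inp a)
  (H_low : forall a, a < n.*2 + 19 -> H a = inp a).

Lemma redirected_read r a : size r = 16 -> 3 <= a <= n.*2 + 3 ->
  with_regs H r ((1 - (0 < a %/ 16)) * B + a) = inp a.
Proof.
move=> size_r a_range; rewrite /with_regs size_r.
case: (ltnP a 16) => a16.
- by rewrite divn_small //= mul1n ifF ?H_saved; lia.
- have -> : 0 < a %/ 16 by rewrite divn_gt0.
  by rewrite subnn mul0n add0n ifF ?H_low; lia.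
Qed.

Lemma loop_body i best bi s :
  1 <= i <= x -> best <= n -> bi <= n -> at_loop_head H i best bi s ->
  let L := input_L i in let c := (0 < i + L - y) * (0 < L - best) in
  exists s', at_loop_head H (i + 1) (best + (L - best) * c) (bi + (i - bi) * c) s' /\
             exec prog A W s 38 s'.
Proof.
move=> i_range best_le bi_le [t1 [t3 [t12 [t13 [t1_le t3_le t12_le t13_le ->]]]]] L c.
have rank_i : 1 <= inp (i + 1 + 1) <= n by apply: inp_rank; lia.
have lcp1_le := inp_le (n.+2 + inp (i + 1 + 1)).
have lcp2_le := inp_le (n.+2 + inp (i + 1 + 1) + 1).
eexists; split; last first.
  run_reg_step. rewrite ifF; last lia.
  do 4 run_reg_step. rewrite divnn. do 4 run_reg_step.
  rewrite (@redirected_read _ (i + 1 + 1)) //; last lia.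
  do 3 run_reg_step. rewrite divnn. do 4 run_reg_step.
  rewrite (@redirected_read _ (n.+2 + inp (i + 1 + 1))) //; last lia.
  do 3 run_reg_step. rewrite divnn. do 4 run_reg_step.
  rewrite (@redirected_read _ (n.+2 + inp (i + 1 + 1) + 1)) //; last lia.
  do 5 run_reg_step. rewrite divnn. do 2 run_reg_step. rewrite divnn.
  do 8 run_reg_step. rewrite ifT; last lia.
  exact: exec0.
by do 4 eexists; split; last reflexivity; lia.
Qed.

Lemma loop_correct (Q : nat -> nat -> nat -> Prop) :
  (forall k best bi, k <= x -> Q k best bi -> best <= n /\ bi <= k) ->
  (forall k best bi, k < x -> Q k best bi ->
     let i := k.+1 in let better := (y < i + input_L i) && (best < input_L i) in
     Q i (if better then input_L i else best) (if better then i else bi)) ->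
  forall k i best bi s, i + k = x + 1 -> 1 <= i -> Q i.-1 best bi ->
  at_loop_head H i best bi s ->
  exists best' bi' s', [/\ Q x best' bi', at_loop_head H (x + 1) best' bi' s' &
                           exec prog A W s (38 * k) s'].
Proof.
move=> Q_bounds Q_step; elim=> [|k IH] i best bi s ik i_gt0 Q_i head_i.
  have ei : i = x + 1 by lia.
  subst i; rewrite addn1 /= in Q_i.
  by exists best, bi, s; split=> //; exact: exec0.
have [best_le bi_le] := Q_bounds i.-1 best bi ltac:(lia) Q_i.
have [s' [head_s' exec_s']] := @loop_body i best bi s ltac:(lia) ltac:(lia) ltac:(lia) head_i.
have better_bit : (0 < i + input_L i - y) * (0 < input_L i - best)
    = ((y < i + input_L i) && (best < input_L i)) :> nat by rewrite mulnb !subn_gt0.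
rewrite /= better_bit !select_bit in head_s'; try by case/andP; lia.
have := Q_step i.-1 best bi ltac:(lia) Q_i; rewrite /= (prednK i_gt0) => Q_i'.
have [best' [bi' [s'' [Q_x head_s'' exec_s'']]]] :=
  IH i.+1 _ _ s' ltac:(lia) isT Q_i' ltac:(by rewrite -addn1).
by exists best', bi', s''; split=> //; rewrite mulnS; exact: exec_trans exec_s' exec_s''.
Qed.

Lemma epilogue best bi s : best <= n -> bi <= n -> at_loop_head H (x + 1) best bi s ->
  exists s', [/\ exec prog A W s 6 s', halted prog s', forall a, memory s' a <= W &
    [/\ memory s' 0 = (0 < best), memory s' 1 = bi & memory s' 2 = bi + best - 1]].
Proof.
move=> best_le bi_le [t1 [t3 [t12 [t13 [t1_le t3_le t12_le t13_le ->]]]]].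
eexists; split.
- run_reg_step. rewrite ifT; last lia.
  run_reg_step. rewrite divnn. do 4 run_reg_step.
  exact: exec0.
- by [].
- by move=> a; apply: with_regs_leq => //; bounds.
- by rewrite /= !with_regs_nth //= subnn addn0.
Qed.

End Loop.

Lemma prog_run (Q : nat -> nat -> nat -> Prop) : Q 0 0 0 ->
  (forall k best bi, k <= x -> Q k best bi -> best <= n /\ bi <= k) ->
  (forall k best bi, k < x -> Q k best bi ->
     let i := k.+1 in let better := (y < i + input_L i) && (best < input_L i) in
     Q i (if better then input_L i else best) (if better then i else bi)) ->
  exists T best bi, [/\ T <= 107 * x, Q x best bi, runs_within prog (State 0 inp) T A W &
    let m := memory (run prog T (State 0 inp)) in
    [/\ m 0 = (0 < best), m 1 = bi & m 2 = bi + best - 1]].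
Proof.
move=> Q0 Q_bounds Q_step.
have [H [s0 [H_le H_saved H_low head_s0 exec_pro]]] := prologue.
have [best [bi [s [Q_x head_s exec_loop]]]] :=
  loop_correct H_le H_saved H_low Q_bounds Q_step (addnC 1 x) isT Q0 head_s0.
have [best_le bi_le] := Q_bounds x best bi (leqnn x) Q_x.
have bi_le_n : bi <= n by lia.
have [s' [exec_epi halt_s' mem_s' out_s']] := epilogue H_le best_le bi_le_n head_s.
have exec_prog := exec_trans (exec_trans exec_pro exec_loop) exec_epi.
exists (63 + 38 * x + 6), best, bi; split=> //; first lia.
  exact: exec_runs_within exec_prog halt_s' mem_s'.
by case: exec_prog => ->.
Qed.

End Program.

Section Input.
Variables (S SA : seq nat) (x y : nat).
Local Notation n := (size S).
Local Notation inp := (input_mem n x y (rank_of SA) (lcp_of S SA)).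

Lemma input_mem_rank j : 1 <= j <= n -> inp (j + 1 + 1) = rank_of SA j.
Proof.
move=> j_range; rewrite /input_mem.
do 3 (case: eqP => [?|_]; first lia).
by rewrite ifT; [congr rank_of; lia | lia].
Qed.

Lemma input_mem_lcp k : 1 <= k <= n.+1 -> inp (n.+2 + k) = lcp_of S SA k.
Proof.
move=> k_range; rewrite /input_mem.
do 3 (case: eqP => [?|_]; first lia).
by rewrite ifF ?ifT; [congr lcp_of; lia | lia | lia].
Qed.

Hypothesis SA_S : is_suffix_array S SA.

Lemma input_L_repeat_len i : 1 <= i <= n -> input_L n inp i = repeat_len S SA i.
Proof.
move=> i_range; have := rank_of_range SA_S i_range.
rewrite /input_L input_mem_rank // => rank_range.
by rewrite -addnA !input_mem_lcp ?addn1 /repeat_len ?maxnE; lia.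
Qed.

Lemma input_mem_rank_range j : 1 <= j <= n -> 1 <= inp (j + 1 + 1) <= n.
Proof. by move=> j_range; rewrite input_mem_rank // (rank_of_range SA_S). Qed.

Lemma scan_inv_input_step k best bi : k < n -> scan_inv S SA y k best bi ->
  let i := k.+1 in let better := (y < i + input_L n inp i) && (best < input_L n inp i) in
  scan_inv S SA y i (if better then input_L n inp i else best) (if better then i else bi).
Proof. by move=> k_lt /scan_invS /=; rewrite input_L_repeat_len //; lia. Qed.

Hypotheses (x_le_n : x <= n) (y_le_n : y <= n).

Lemma input_mem_leq a : inp a <= n.
Proof.
rewrite /input_mem; case: eqP => // a0; case: eqP => // a1; case: eqP => // a2.
case: ifP => a_rank.
  by rewrite /rank_of -(size_SA SA_S) index_mem (mem_SA SA_S); lia.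
case: ifP => // _; rewrite /lcp_of; case: ifP => // _.
by apply: leq_trans (lcp_leq_size _ _) _; rewrite size_suffix_from leq_subr.
Qed.

End Input.

Lemma leq_quadratic_expn4 n : 0 < n -> n * n + n.*2 + 40 <= n.+2 ^ 4.
Proof.
move=> n_gt0; have sq : n.+2 ^ 2 = n * n + 4 * n + 4 by rewrite expnS expn1; nia.
have : 9 * n.+2 ^ 2 <= n.+2 ^ 2 * n.+2 ^ 2 by rewrite leq_mul // sq; lia.
by rewrite -expnD sq; lia.
Qed.

Theorem lemma5 :
  exists (P : program) (c d e : nat),
    forall (sigma n : nat) (S SA : seq nat) (x y : nat),
      is_string sigma n S ->
      is_suffix_array S SA ->
      1 <= x -> x <= y -> y <= n ->
      exists T,
        T <= c * x /\
        runs_within P (State 0 (input_mem n x y (rank_of SA) (lcp_of S SA)))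
          T (d * n.+1) (n.+2 ^ e) /\
        correct_output S x y
          (memory (run P T (State 0 (input_mem n x y (rank_of SA) (lcp_of S SA))))).
Proof.
exists prog, 107, 40, 4 => sigma n S SA x y [_ [<- _]] SA_S x_gt0 x_le_y y_le_n.
have x_le_n := leq_trans x_le_y y_le_n.
have [T [best [bi [T_le inv_x runs [m0 m1 m2]]]]] :=
  prog_run x_gt0 x_le_y y_le_n (leq_quadratic_expn4 (leq_trans x_gt0 x_le_n)) (leqnn _) erefl
    (input_mem_leq SA_S x_le_n y_le_n) erefl erefl erefl (input_mem_rank_range x y SA_S)
    (scan_inv0 S SA y)
    (fun k best bi k_le => scan_inv_bounds SA_S (leq_trans k_le x_le_n))
    (fun k best bi k_lt => scan_inv_input_step x SA_S (leq_trans k_lt x_le_n)).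
by exists T; split=> //; split=> //; apply: scan_inv_correct inv_x m0 m1 m2.
Qed.
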